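(* Let $p,N\in\mathbb{N}$, $x_0<\cdots<x_N$, data $y_{n,2k}\in\mathbb{R}$ ($n=0,\dots,N$, $k=0,\dots,p$), and $\alpha\in\Theta_{2p}$. Let $\ell_\alpha$ be the Lidstone FIF and $\phi$ the classical Lidstone interpolation function for this data. Then $$\|\ell_\alpha-\phi\|_\infty\le\frac{|\alpha|_\infty}{1-|\alpha|_\infty}\big(\|\phi\|_\infty+M_{0,2p}\big),\qquad M_{0,2p}=\frac{2\rho\pi}{3}\sum_{l=0}^{p}\Big(\frac{x_N-x_0}{\pi}\Big)^{2l}.$$
   Context: Lidstone polynomials $\Lambda_l$: $\Lambda_0(x)=x$, $\Lambda_l''=\Lambda_{l-1}$, $\Lambda_l(0)=\Lambda_l(1)=0$ for $l\ge1$. $a_n=\frac{x_n-x_{n-1}}{x_N-x_0}$, $L_n(x)=a_nx+\frac{x_Nx_{n-1}-x_0x_n}{x_N-x_0}$. $\Theta_{2p}=\{\alpha\in\mathbb{R}^N:|\alpha_n|<a_n^{2p}\ \forall n\}$. For $\alpha\in\Theta_{2p}$, the Lidstone FIF $\ell_\alpha$ is the unique $C^{2p}[x_0,x_N]$ function satisfying $\ell_\alpha(L_n(x))=\alpha_n\ell_\alpha(x)+q_n(x)$ for $x\in[x_0,x_N]$, $n=1,\dots,N$, where $q_n(x)=\sum_{l=0}^p[(a_n^{2l}y_{n-1,2l}-\alpha_ny_{0,2l})\Lambda_l(\frac{x_N-x}{x_N-x_0})+(a_n^{2l}y_{n,2l}-\alpha_ny_{N,2l})\Lambda_l(\frac{x-x_0}{x_N-x_0})](x_N-x_0)^{2l}$;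 it satisfies $\ell_\alpha^{(2k)}(x_n)=y_{n,2k}$. The classical Lidstone interpolation function $\phi$ is defined on each $[x_{n-1},x_n]$, with $h_n=x_n-x_{n-1}$, by $\phi(x)=\sum_{l=0}^p\big[y_{n-1,2l}\Lambda_l(\frac{x_n-x}{h_n})+y_{n,2l}\Lambda_l(\frac{x-x_{n-1}}{h_n})\big]h_n^{2l}$ (it equals $\ell_0$). Notation: $|\alpha|_\infty=\max_n|\alpha_n|$, $\|f\|_\infty=\sup_{[x_0,x_N]}|f|$, $\rho=\max_{0\le k\le p}\max\{|y_{0,2k}|,|y_{N,2k}|\}$. *)

From Stdlib Require Import Reals Lra Lia ClassicalEpsilon.
Open Scope R_scope.

Definition is_lidstone_family (Lam : nat -> R -> R) : Prop :=
  (forall t, Lam 0%nat t = t) /\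
  (forall l : nat, (1 <= l)%nat ->
     Lam l 0 = 0 /\ Lam l 1 = 0 /\
     exists D : R -> R, forall t,
       derivable_pt_lim (Lam l) t (D t) /\
       derivable_pt_lim D t (Lam (l - 1)%nat t)).

Definition a_coef (x : nat -> R) (N n : nat) : R :=
  (x n - x (n - 1)%nat) / (x N - x 0%nat).
Definition L_map (x : nat -> R) (N n : nat) (t : R) : R :=
  a_coef x N n * t + (x N * x (n - 1)%nat - x 0%nat * x n) / (x N - x 0%nat).

Definition in_Theta (x : nat -> R) (N p : nat) (alpha : nat -> R) : Prop :=
  forall n, (1 <= n <= N)%nat -> Rabs (alpha n) < a_coef x N n ^ (2 * p).

(* y n k stands for y_{n,2k} *)
Definition q_fun (Lam : nat -> R -> R) (x : nat -> R) (y : nat -> nat -> R)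
  (alpha : nat -> R) (N p n : nat) (t : R) : R :=
  sum_f_R0 (fun l =>
    ((a_coef x N n ^ (2 * l) * y (n - 1)%nat l - alpha n * y 0%nat l)
       * Lam l ((x N - t) / (x N - x 0%nat))
     + (a_coef x N n ^ (2 * l) * y n l - alpha n * y N l)
       * Lam l ((t - x 0%nat) / (x N - x 0%nat)))
    * (x N - x 0%nat) ^ (2 * l)) p.

Definition derive_within (a b : R) (f : R -> R) (t l : R) : Prop :=
  forall eps, 0 < eps -> exists delta, 0 < delta /\
    forall h, h <> 0 -> Rabs h < delta -> a <= t + h <= b ->
      Rabs ((f (t + h) - f t) / h - l) < eps.

Definition continuous_within (a b : R) (f : R -> R) (t : R) : Prop :=
  forall eps, 0 < eps -> exists delta, 0 < delta /\
    forall s, a <= s <= b -> Rabs (s - t) < delta -> Rabs (f s - f t) < eps.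

Definition C_on (m : nat) (a b : R) (f : R -> R) : Prop :=
  exists D : nat -> R -> R,
    (forall t, a <= t <= b -> D 0%nat t = f t) /\
    (forall k, (k < m)%nat -> forall t, a <= t <= b ->
        derive_within a b (D k) t (D (S k) t)) /\
    (forall t, a <= t <= b -> continuous_within a b (D m) t).

Definition sup_norm (a b : R) (f : R -> R) : R :=
  epsilon (inhabits 0)
    (fun s => is_lub (fun v => exists t, a <= t <= b /\ v = Rabs (f t)) s).

Fixpoint alpha_max (alpha : nat -> R) (N : nat) : R :=
  match N with
  | O => 0
  | S n => Rmax (alpha_max alpha n) (Rabs (alpha (S n)))
  end.

Fixpoint rho_max (y : nat -> nat -> R) (N p : nat) : R :=
  match p with
  | O => Rmax (Rabs (y 0%nat 0%nat)) (Rabs (y N 0%nat))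
  | S k => Rmax (rho_max y N k) (Rmax (Rabs (y 0%nat (S k))) (Rabs (y N (S k))))
  end.

Definition M0 (x : nat -> R) (y : nat -> nat -> R) (N p : nat) : R :=
  2 * rho_max y N p * PI / 3 *
  sum_f_R0 (fun l => ((x N - x 0%nat) / PI) ^ (2 * l)) p.

(* Each Lidstone polynomial satisfies [|Lam (k+1) t| <= sin (PI t) / (3 PI^(2k+1))]
   on [0, 1]: compare [Lam (k+1)] with a multiple of [sin (PI t)] (a cubic for
   [k = 0]) by the maximum principle for functions with nonpositive second
   derivative.  Hence [|Lam l| <= PI / 3 / PI^(2l)], and the Lidstone interpolant
   [sigma] of the end data [y_{0,2k}], [y_{N,2k}] on [x_0, x_N] is bounded by
   [M_{0,2p}].  By the self-affinity equation, [ell - phi] on [x_{n-1}, x_n] equals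
   [alpha_n (ell - sigma)] composed with the inverse of [L_n], so
   [||ell - phi|| <= |alpha| (||ell - phi|| + ||phi|| + M_{0,2p})]; solving for
   [||ell - phi||] gives the bound since [|alpha| < 1]. *)

From Stdlib Require Import Reals Lra Lia ClassicalEpsilon.
From Coquelicot Require Import Coquelicot.
Open Scope R_scope.

Lemma PI_bounds : 3 <= PI <= 7/2.
Proof.
  destruct (PI_ineq 3) as [H3 _]; destruct (PI_ineq 1) as [_ H1].
  unfold tg_alt, PI_tg in H1, H3; simpl in H1, H3; lra.
Qed.

Lemma sin_ge_cubic a : 0 <= a <= PI / 2 -> a - a ^ 3 / 6 <= sin a.
Proof.
  intros Ha; pose proof PI_bounds.
  destruct (SIN a ltac:(lra) ltac:(lra)) as [Hlb _].
  unfold sin_lb, sin_approx, sin_term in Hlb; simpl in Hlb.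
  assert (0 <= a ^ 5 * (42 - a * a)) by (apply Rmult_le_pos; [apply pow_le|]; nra).
  lra.
Qed.

(* On [0, 1/2] use [sin_ge_cubic] at [PI t]; on [1/2, 1] use it at [PI (1 - t)]. *)
Lemma cubic_le_sin_PI t : 0 <= t <= 1 -> (t - t ^ 3) * PI / 2 <= sin (PI * t).
Proof.
  intros Ht; pose proof PI_bounds.
  assert (HPI2 : PI * PI <= 49 / 4) by nra.
  destruct (Rle_or_lt t (1 / 2)) as [Hle | Hgt].
  - pose proof (sin_ge_cubic (PI * t) ltac:(nra)).
    assert (t * (t * t * (PI * PI - 3) - 3) <= 0).
    { apply Rmult_le_0_l; [lra | nra]. }
    nra.
  - set (s := 1 - t).
    replace (PI * t) with (PI - PI * s) by (unfold s; ring).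
    rewrite sin_PI_x.
    pose proof (sin_ge_cubic (PI * s) ltac:(unfold s; nra)).
    assert (s * (s * (3 + PI * PI) - 9) <= 0) by (apply Rmult_le_0_l; unfold s; nra).
    assert (0 <= PI / 6 * s) by (unfold s; nra).
    replace t with (1 - s) by (unfold s; ring).
    assert (E : (1 - s - (1 - s) ^ 3) * PI / 2 - (PI * s - (PI * s) ^ 3 / 6)
                = PI / 6 * s * (s * (s * (3 + PI * PI) - 9))) by field.
    nra.
Qed.

(* If [f] had a negative value inside, MVT would produce a point where [f'']
   is positive. *)
Lemma concave_nonneg (f f' f'' : R -> R) (a b : R) :
  (forall t, derivable_pt_lim f t (f' t)) ->
  (forall t, derivable_pt_lim f' t (f'' t)) ->
  (forall t, a <= t <= b -> f'' t <= 0) ->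
  0 <= f a -> 0 <= f b -> forall t, a <= t <= b -> 0 <= f t.
Proof.
  intros Df Df' Hconc Ha Hb t Ht.
  destruct (Rle_or_lt 0 (f t)) as [| Hneg]; [assumption | exfalso].
  assert (Hat : a < t) by (destruct (Req_dec t a); subst; lra).
  assert (Htb : t < b) by (destruct (Req_dec t b); subst; lra).
  destruct (MVT_cor2 f f' a t Hat (fun c _ => Df c)) as [c1 [E1 Hc1]].
  destruct (MVT_cor2 f f' t b Htb (fun c _ => Df c)) as [c2 [E2 Hc2]].
  assert (f' c1 < 0) by nra.
  assert (0 < f' c2) by nra.
  assert (Hc12 : c1 < c2) by lra.
  destruct (MVT_cor2 f' f'' c1 c2 Hc12 (fun c _ => Df' c)) as [c [E Hc]].
  assert (f'' c <= 0) by (apply Hconc; lra).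
  nra.
Qed.

Lemma Rabs_le_of_second_derivative_le (u u' u'' w w' w'' : R -> R) (a b : R) :
  (forall t, derivable_pt_lim u t (u' t)) ->
  (forall t, derivable_pt_lim u' t (u'' t)) ->
  (forall t, derivable_pt_lim w t (w' t)) ->
  (forall t, derivable_pt_lim w' t (w'' t)) ->
  (forall t, a <= t <= b -> Rabs (u'' t) <= - w'' t) ->
  Rabs (u a) <= w a -> Rabs (u b) <= w b ->
  forall t, a <= t <= b -> Rabs (u t) <= w t.
Proof.
  intros Du Du' Dw Dw' H2 Ha Hb t Ht.
  assert (Hminus : 0 <= w t - u t).
  { apply (concave_nonneg (fun t => w t - u t) (fun t => w' t - u' t)
             (fun t => w'' t - u'' t) a b); auto.
    - intro s; apply derivable_pt_lim_minus; auto.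
    - intro s; apply derivable_pt_lim_minus; auto.
    - intros s Hs; specialize (H2 s Hs); apply Rabs_le_between in H2; lra.
    - apply Rabs_le_between in Ha; lra.
    - apply Rabs_le_between in Hb; lra. }
  assert (Hplus : 0 <= w t + u t).
  { apply (concave_nonneg (fun t => w t + u t) (fun t => w' t + u' t)
             (fun t => w'' t + u'' t) a b); auto.
    - intro s; apply derivable_pt_lim_plus; auto.
    - intro s; apply derivable_pt_lim_plus; auto.
    - intros s Hs; specialize (H2 s Hs); apply Rabs_le_between in H2; lra.
    - apply Rabs_le_between in Ha; lra.
    - apply Rabs_le_between in Hb; lra. }
  apply Rabs_le; lra.
Qed.

Lemma lidstone_le_sin (Lam : nat -> R -> R) : is_lidstone_family Lam ->
  forall k t, 0 <= t <= 1 -> Rabs (Lam (S k) t) <= sin (PI * t) / (3 * PI ^ (2 * k + 1)).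
Proof.
  intros [Lam0 HLam] k; pose proof PI_bounds as HPI.
  induction k as [| k IH]; intros t Ht.
  - destruct (HLam 1%nat ltac:(lia)) as [L0 [L1 [D HD]]]; simpl in HD.
    assert (Hcubic : Rabs (Lam 1%nat t) <= (t - t ^ 3) / 6).
    { apply (Rabs_le_of_second_derivative_le _ D (Lam 0%nat)
               (fun t => (t - t ^ 3) / 6) (fun t => (1 - 3 * t ^ 2) / 6) (fun t => - t) 0 1);
        auto; try (intro s; apply HD).
      - intro s; apply is_derive_Reals; auto_derive; [easy | field].
      - intro s; apply is_derive_Reals; auto_derive; [easy | field].
      - intros s Hs; rewrite Lam0, Rabs_right; lra.
      - rewrite L0, Rabs_R0; simpl; lra.
      - rewrite L1, Rabs_R0; simpl; lra. }
    pose proof (cubic_le_sin_PI t Ht).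
    simpl (2 * 0 + 1)%nat; rewrite pow_1.
    apply (Rle_trans _ _ _ Hcubic).
    replace ((t - t ^ 3) / 6) with ((t - t ^ 3) * PI / 2 / (3 * PI)) by (field; lra).
    apply Rmult_le_compat_r; [apply Rlt_le, Rinv_0_lt_compat |]; lra.
  - destruct (HLam (S (S k)) ltac:(lia)) as [L0 [L1 [D HD]]].
    replace (S (S k) - 1)%nat with (S k) in HD by lia.
    set (C := / (3 * PI ^ (2 * S k + 1))).
    assert (HC : / (3 * PI ^ (2 * k + 1)) = C * (PI * PI)).
    { unfold C; replace (2 * S k + 1)%nat with (S (S (2 * k + 1))) by lia; simpl pow.
      field; split; [apply pow_nonzero |]; lra. }
    replace (sin (PI * t) / _) with (C * sin (PI * t)) by (unfold C, Rdiv; ring).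
    apply (Rabs_le_of_second_derivative_le _ D (Lam (S k))
             (fun t => C * sin (PI * t)) (fun t => C * PI * cos (PI * t))
             (fun t => - C * PI * PI * sin (PI * t)) 0 1); auto; try (intro s; apply HD).
    + intro s; apply is_derive_Reals; auto_derive; [easy | ring].
    + intro s; apply is_derive_Reals; auto_derive; [easy | ring].
    + intros s Hs; specialize (IH s Hs); unfold Rdiv in IH; rewrite HC in IH; lra.
    + rewrite L0, Rmult_0_r, sin_0, Rabs_R0; lra.
    + rewrite L1, Rmult_1_r, sin_PI, Rabs_R0; lra.
Qed.

Lemma lidstone_bound (Lam : nat -> R -> R) : is_lidstone_family Lam ->
  forall l t, 0 <= t <= 1 -> Rabs (Lam l t) <= PI / 3 / PI ^ (2 * l).
Proof.
  intros HL l t Ht; pose proof PI_bounds.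
  destruct l as [| k].
  - destruct HL as [Lam0 _]; rewrite Lam0, Rabs_right; simpl; lra.
  - pose proof (lidstone_le_sin Lam HL k t Ht) as Hsin.
    pose proof (SIN_bound (PI * t)).
    assert (0 < PI ^ (2 * k + 1)) by (apply pow_lt; lra).
    replace (PI / 3 / PI ^ (2 * S k)) with (1 / (3 * PI ^ (2 * k + 1))).
    2:{ replace (2 * S k)%nat with (S (2 * k + 1)) by lia; simpl pow.
        field; split; [apply pow_nonzero |]; lra. }
    apply (Rle_trans _ _ _ Hsin); unfold Rdiv.
    apply Rmult_le_compat_r; [apply Rlt_le, Rinv_0_lt_compat |]; lra.
Qed.

Lemma sup_norm_is_lub (a b : R) (f : R -> R) (M : R) : a <= b ->
  (forall t, a <= t <= b -> Rabs (f t) <= M) ->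
  is_lub (fun v => exists t, a <= t <= b /\ v = Rabs (f t)) (sup_norm a b f).
Proof.
  intros Hab HM; unfold sup_norm; apply epsilon_spec.
  destruct (completeness (fun v => exists t, a <= t <= b /\ v = Rabs (f t))) as [m Hm].
  3: exists m; exact Hm.
  - exists M; intros v [t [Ht ->]]; auto.
  - exists (Rabs (f a)), a; split; [lra | reflexivity].
Qed.

Lemma Rabs_le_sup_norm (a b : R) (f : R -> R) (M t : R) : a <= b ->
  (forall t, a <= t <= b -> Rabs (f t) <= M) ->
  a <= t <= b -> Rabs (f t) <= sup_norm a b f.
Proof.
  intros Hab HM Ht; apply (sup_norm_is_lub a b f M Hab HM); exists t; auto.
Qed.

Lemma sup_norm_le (a b : R) (f : R -> R) (M K : R) : a <= b ->
  (forall t, a <= t <= b -> Rabs (f t) <= M) ->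
  (forall t, a <= t <= b -> Rabs (f t) <= K) -> sup_norm a b f <= K.
Proof.
  intros Hab HM HK; apply (sup_norm_is_lub a b f M Hab HM).
  intros v [t [Ht ->]]; auto.
Qed.

Lemma derive_within_continuous_within (a b : R) (g : R -> R) (t l : R) :
  derive_within a b g t l -> continuous_within a b g t.
Proof.
  intros Hd eps Heps.
  destruct (Hd 1 ltac:(lra)) as [d [Hd0 Hd1]].
  set (e := eps / (Rabs l + 1)).
  assert (He : 0 < e) by (unfold e; pose proof (Rabs_pos l); apply Rdiv_lt_0_compat; lra).
  exists (Rmin d e); split; [apply Rmin_pos; lra |].
  intros s Hs Hst.
  destruct (Req_dec s t) as [-> | Hne]; [rewrite Rminus_eq_0, Rabs_R0; lra |].
  pose proof (Rmin_l d e); pose proof (Rmin_r d e).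
  specialize (Hd1 (s - t) ltac:(lra) ltac:(lra) ltac:(lra)).
  replace (t + (s - t)) with s in Hd1 by ring.
  set (q := (g s - g t) / (s - t)) in Hd1.
  assert (Hq : Rabs q <= Rabs l + 1).
  { replace q with (q - l + l) by ring; pose proof (Rabs_triang (q - l) l); lra. }
  replace (g s - g t) with ((s - t) * q) by (unfold q; field; lra).
  rewrite Rabs_mult.
  apply Rle_lt_trans with (Rabs (s - t) * (Rabs l + 1));
    [apply Rmult_le_compat_l; [apply Rabs_pos | lra] |].
  replace eps with (e * (Rabs l + 1)) by (unfold e; field; pose proof (Rabs_pos l); lra).
  apply Rmult_lt_compat_r; [pose proof (Rabs_pos l) |]; lra.
Qed.

Lemma C_on_continuous_within (m : nat) (a b : R) (f : R -> R) :
  C_on m a b f -> forall t, a <= t <= b -> continuous_within a b f t.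
Proof.
  intros [D [HD0 [HD HDm]]] t Ht.
  assert (Hcont : continuous_within a b (D 0%nat) t).
  { destruct m as [| m]; [now apply HDm |].
    apply (derive_within_continuous_within a b _ t (D 1%nat t)), HD; [lia | auto]. }
  intros eps Heps; destruct (Hcont eps Heps) as [d [Hd Hcd]].
  exists d; split; auto.
  intros s Hs Hst; rewrite <- (HD0 s Hs), <- (HD0 t Ht); auto.
Qed.

(* Composing with the projection onto [a, b] turns continuity within [a, b]
   into continuity on all of R, where [continuity_ab_maj] applies. *)
Lemma continuous_within_bounded (a b : R) (f : R -> R) : a <= b ->
  (forall t, a <= t <= b -> continuous_within a b f t) ->
  exists M, forall t, a <= t <= b -> Rabs (f t) <= M.
Proof.
  intros Hab Hc.
  set (clamp := fun t => Rmax a (Rmin b t)).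
  assert (Hin : forall t, a <= clamp t <= b)
    by (intro; unfold clamp, Rmax, Rmin; repeat destruct Rle_dec; lra).
  assert (Hid : forall t, a <= t <= b -> clamp t = t)
    by (intros; unfold clamp, Rmax, Rmin; repeat destruct Rle_dec; lra).
  assert (Hlip : forall s t, Rabs (clamp s - clamp t) <= Rabs (s - t))
    by (intros; unfold clamp, Rmax, Rmin; repeat destruct Rle_dec; split_Rabs; lra).
  set (g := fun t => Rabs (f (clamp t))).
  assert (Hg : forall t, continuity_pt g t).
  { intros t eps Heps.
    destruct (Hc (clamp t) (Hin t) eps Heps) as [d [Hd Hcd]].
    exists d; split; auto; intros s [_ Hs]; simpl in *; unfold R_dist in *.
    specialize (Hcd (clamp s) (Hin s) ltac:(pose proof (Hlip s t); lra)).
    unfold g; pose proof (Rabs_triang_inv2 (f (clamp s)) (f (clamp t))); lra. }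
  destruct (continuity_ab_maj g a b Hab (fun c _ => Hg c)) as [t0 [Ht0 _]].
  exists (g t0); intros t Ht; specialize (Ht0 t Ht); unfold g in Ht0; rewrite Hid in Ht0; auto.
Qed.

Lemma exists_subinterval (x : nat -> R) (m : nat) (t : R) : (1 <= m)%nat ->
  x 0%nat <= t <= x m -> exists n, (1 <= n <= m)%nat /\ x (n - 1)%nat <= t <= x n.
Proof.
  induction m as [| m IH]; intros Hm Ht; [lia |].
  destruct (Nat.eq_dec m 0) as [-> | Hm0]; [exists 1%nat; simpl; split; [lia | lra] |].
  destruct (Rle_or_lt t (x m)) as [Hle | Hgt].
  - destruct (IH ltac:(lia) ltac:(lra)) as [n [Hn Htn]]; exists n; split; [lia | auto].
  - exists (S m); split; [lia |]; rewrite Nat.sub_succ, Nat.sub_0_r; lra.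
Qed.

Lemma bounded_of_bounded_pieces (x : nat -> R) (m : nat) (f : R -> R) :
  (forall n, (1 <= n <= m)%nat ->
     exists M, forall t, x (n - 1)%nat <= t <= x n -> Rabs (f t) <= M) ->
  exists M, forall t, x 0%nat <= t <= x m -> Rabs (f t) <= M.
Proof.
  induction m as [| m IH]; intros Hpieces.
  - exists (Rabs (f (x 0%nat))); intros t Ht; replace t with (x 0%nat) by lra; lra.
  - destruct (IH (fun n Hn => Hpieces n ltac:(lia))) as [M HM].
    destruct (Hpieces (S m) ltac:(lia)) as [M' HM'].
    rewrite Nat.sub_succ, Nat.sub_0_r in HM'.
    exists (Rmax M M'); intros t Ht.
    destruct (Rle_or_lt t (x m)).
    + apply (Rle_trans _ M); [apply HM; lra | apply Rmax_l].
    + apply (Rle_trans _ M'); [apply HM'; lra | apply Rmax_r].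
Qed.

Lemma Rabs_le_alpha_max (alpha : nat -> R) (N n : nat) : (1 <= n <= N)%nat ->
  Rabs (alpha n) <= alpha_max alpha N.
Proof.
  induction N as [| N IH]; intros Hn; [lia |]; simpl.
  destruct (Nat.eq_dec n (S N)) as [-> | Hne]; [apply Rmax_r |].
  apply (Rle_trans _ _ _ (IH ltac:(lia))), Rmax_l.
Qed.

Lemma alpha_max_ge0 (alpha : nat -> R) (N : nat) : 0 <= alpha_max alpha N.
Proof.
  induction N as [| N IH]; simpl; [lra |].
  apply (Rle_trans _ _ _ IH), Rmax_l.
Qed.

Lemma alpha_max_lt_1 (alpha : nat -> R) (N : nat) :
  (forall n, (1 <= n <= N)%nat -> Rabs (alpha n) < 1) -> alpha_max alpha N < 1.
Proof.
  induction N as [| N IH]; intros H; simpl; [lra |].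
  apply Rmax_lub_lt; [apply IH; intros; apply H | apply H]; lia.
Qed.

Lemma Rabs_le_rho_max (y : nat -> nat -> R) (N p l : nat) : (l <= p)%nat ->
  Rabs (y 0%nat l) <= rho_max y N p /\ Rabs (y N l) <= rho_max y N p.
Proof.
  induction p as [| p IH]; intros Hl; simpl.
  - replace l with 0%nat by lia; split; [apply Rmax_l | apply Rmax_r].
  - pose proof (Rmax_l (rho_max y N p) (Rmax (Rabs (y 0%nat (S p))) (Rabs (y N (S p))))).
    pose proof (Rmax_r (rho_max y N p) (Rmax (Rabs (y 0%nat (S p))) (Rabs (y N (S p))))).
    destruct (Nat.eq_dec l (S p)) as [-> | Hne].
    + pose proof (Rmax_l (Rabs (y 0%nat (S p))) (Rabs (y N (S p)))).
      pose proof (Rmax_r (Rabs (y 0%nat (S p))) (Rabs (y N (S p)))); lra.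
    + destruct (IH ltac:(lia)); lra.
Qed.

Lemma le_of_le_contraction (A K c : R) : 0 <= A < 1 ->
  K <= A * (K + c) -> K <= A / (1 - A) * c.
Proof.
  intros HA HK; apply (Rmult_le_reg_r (1 - A)); [lra |].
  replace (A / (1 - A) * c * (1 - A)) with (A * c) by (field; lra); lra.
Qed.

Definition lidstone_interp (Lam : nat -> R -> R) (p : nat) (c d : nat -> R)
  (a b t : R) : R :=
  sum_f_R0 (fun l =>
    (c l * Lam l ((b - t) / (b - a)) + d l * Lam l ((t - a) / (b - a)))
    * (b - a) ^ (2 * l)) p.

Lemma Rabs_lidstone_interp_le (Lam : nat -> R -> R) (p : nat) (c d : nat -> R)
  (a b t : R) : is_lidstone_family Lam -> a < b -> a <= t <= b ->
  Rabs (lidstone_interp Lam p c d a b t)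
  <= sum_f_R0 (fun l => (Rabs (c l) + Rabs (d l)) * (PI / 3) * ((b - a) / PI) ^ (2 * l)) p.
Proof.
  intros HL Hab Ht; pose proof PI_bounds.
  assert (Hu : forall u, u = (b - t) / (b - a) \/ u = (t - a) / (b - a) -> 0 <= u <= 1).
  { intros u Hu; assert (u * (b - a) = b - t \/ u * (b - a) = t - a)
      by (destruct Hu as [-> | ->]; [left | right]; field; lra).
    split; nra. }
  eapply Rle_trans; [apply sum_f_R0_triangle | apply sum_Rle; intros l _].
  pose proof (lidstone_bound Lam HL l _ (Hu _ (or_introl eq_refl))).
  pose proof (lidstone_bound Lam HL l _ (Hu _ (or_intror eq_refl))).
  assert (0 < PI ^ (2 * l)) by (apply pow_lt; lra).
  rewrite Rabs_mult, (Rabs_right ((b - a) ^ _)) by (apply Rle_ge, pow_le; lra).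
  replace ((Rabs (c l) + Rabs (d l)) * (PI / 3) * ((b - a) / PI) ^ (2 * l))
    with ((Rabs (c l) * (PI / 3 / PI ^ (2 * l)) + Rabs (d l) * (PI / 3 / PI ^ (2 * l)))
          * (b - a) ^ (2 * l))
    by (unfold Rdiv; rewrite Rpow_mult_distr, pow_inv; field; lra).
  apply Rmult_le_compat_r; [apply pow_le; lra |].
  eapply Rle_trans; [apply Rabs_triang | rewrite !Rabs_mult].
  apply Rplus_le_compat; apply Rmult_le_compat_l; auto using Rabs_pos.
Qed.

Section LidstoneFIF.

Variables (p N : nat) (x : nat -> R) (y : nat -> nat -> R) (alpha : nat -> R)
  (Lam : nat -> R -> R) (ell phi : R -> R).

Hypothesis HN : (1 <= N)%nat.
Hypothesis Hx : forall i, (i < N)%nat -> x i < x (S i).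
Hypothesis HLam : is_lidstone_family Lam.
Hypothesis Hell_eq : forall n, (1 <= n <= N)%nat -> forall t, x 0%nat <= t <= x N ->
  ell (L_map x N n t) = alpha n * ell t + q_fun Lam x y alpha N p n t.
Hypothesis Hphi : forall n, (1 <= n <= N)%nat -> forall t, x (n - 1)%nat <= t <= x n ->
  phi t = lidstone_interp Lam p (y (n - 1)%nat) (y n) (x (n - 1)%nat) (x n) t.

Lemma nodes_le i j : (i <= j <= N)%nat -> x i <= x j.
Proof.
  intros [Hij HjN]; induction Hij as [| j Hij IH]; [lra |].
  pose proof (Hx j ltac:(lia)); specialize (IH ltac:(lia)); lra.
Qed.

Lemma subinterval_in_range n : (1 <= n <= N)%nat ->
  x 0%nat <= x (n - 1)%nat /\ x (n - 1)%nat < x n /\ x n <= x N.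
Proof.
  intros Hn; pose proof (Hx (n - 1) ltac:(lia)) as Hstep.
  replace (S (n - 1)) with n in Hstep by lia.
  split; [apply nodes_le; lia | split; [exact Hstep | apply nodes_le; lia]].
Qed.

Lemma nodes_lt_ends : x 0%nat < x N.
Proof. destruct (subinterval_in_range N ltac:(lia)) as [? [? ?]]; lra. Qed.

Lemma alpha_max_lt_1_of_in_Theta : in_Theta x N p alpha -> alpha_max alpha N < 1.
Proof.
  intros Halpha; apply alpha_max_lt_1; intros n Hn.
  destruct (subinterval_in_range n Hn) as [H0 [Hn1 HnN]].
  pose proof nodes_lt_ends.
  assert (Ha : 0 <= a_coef x N n <= 1).
  { unfold a_coef; split; [apply Rdiv_le_0_compat; lra |].
    apply (Rmult_le_reg_r (x N - x 0%nat)); [lra |].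
    unfold Rdiv; rewrite Rmult_assoc, Rinv_l; lra. }
  apply (Rlt_le_trans _ _ _ (Halpha n Hn)); rewrite <- (pow1 (2 * p)).
  apply pow_incr; lra.
Qed.

(* [L_map n] is the affine bijection of [x 0, x N] onto [x (n-1), x n]; in the
   rescaled variable the local Lidstone basis becomes the global one, and
   [a_n ^ (2 l) (x N - x 0) ^ (2 l) = (x n - x (n-1)) ^ (2 l)]. *)
Lemma q_fun_eq n s : (1 <= n <= N)%nat ->
  q_fun Lam x y alpha N p n s
  = lidstone_interp Lam p (y (n - 1)%nat) (y n) (x (n - 1)%nat) (x n) (L_map x N n s)
    - alpha n * lidstone_interp Lam p (y 0%nat) (y N) (x 0%nat) (x N) s.
Proof.
  intros Hn; destruct (subinterval_in_range n Hn) as [_ [Hn1 _]].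
  pose proof nodes_lt_ends.
  unfold q_fun, lidstone_interp, L_map, a_coef.
  rewrite scal_sum, <- minus_sum; apply sum_eq; intros l _.
  replace ((x n - ((x n - x (n - 1)%nat) / (x N - x 0%nat) * s
             + (x N * x (n - 1)%nat - x 0%nat * x n) / (x N - x 0%nat)))
           / (x n - x (n - 1)%nat))
    with ((x N - s) / (x N - x 0%nat)) by (field; lra).
  replace (((x n - x (n - 1)%nat) / (x N - x 0%nat) * s
             + (x N * x (n - 1)%nat - x 0%nat * x n) / (x N - x 0%nat) - x (n - 1)%nat)
           / (x n - x (n - 1)%nat))
    with ((s - x 0%nat) / (x N - x 0%nat)) by (field; lra).
  replace ((x n - x (n - 1)%nat) ^ (2 * l))
    with (((x n - x (n - 1)%nat) / (x N - x 0%nat)) ^ (2 * l) * (x N - x 0%nat) ^ (2 * l))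
    by (rewrite <- Rpow_mult_distr; f_equal; field; lra).
  ring.
Qed.

Lemma L_map_onto n t : (1 <= n <= N)%nat -> x (n - 1)%nat <= t <= x n ->
  exists s, x 0%nat <= s <= x N /\ L_map x N n s = t.
Proof.
  intros Hn Ht; destruct (subinterval_in_range n Hn) as [_ [Hn1 _]].
  pose proof nodes_lt_ends.
  set (u := (t - x (n - 1)%nat) / (x n - x (n - 1)%nat)).
  assert (Hu : u * (x n - x (n - 1)%nat) = t - x (n - 1)%nat) by (unfold u; field; lra).
  exists (x 0%nat + (x N - x 0%nat) * u); split; [split; nra |].
  unfold L_map, a_coef.
  transitivity (x (n - 1)%nat + u * (x n - x (n - 1)%nat)); [field | rewrite Hu]; lra.
Qed.

Lemma error_self_similar n t : (1 <= n <= N)%nat -> x (n - 1)%nat <= t <= x n ->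
  exists s, x 0%nat <= s <= x N /\
    ell t - phi t
    = alpha n * (ell s - lidstone_interp Lam p (y 0%nat) (y N) (x 0%nat) (x N) s).
Proof.
  intros Hn Ht; destruct (L_map_onto n t Hn Ht) as [s [Hs Hst]].
  exists s; split; [exact Hs |].
  rewrite (Hphi n Hn t Ht), <- Hst, (Hell_eq n Hn s Hs), q_fun_eq by exact Hn.
  ring.
Qed.

Lemma Rabs_lidstone_interp_ends_le s : x 0%nat <= s <= x N ->
  Rabs (lidstone_interp Lam p (y 0%nat) (y N) (x 0%nat) (x N) s) <= M0 x y N p.
Proof.
  intros Hs; pose proof PI_bounds.
  apply (Rle_trans _ _ _ (Rabs_lidstone_interp_le _ _ _ _ _ _ _ HLam nodes_lt_ends Hs)).
  unfold M0; rewrite scal_sum; apply sum_Rle; intros l Hl.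
  destruct (Rabs_le_rho_max y N p l Hl).
  assert (0 <= ((x N - x 0%nat) / PI) ^ (2 * l))
    by (apply pow_le, Rdiv_le_0_compat; pose proof nodes_lt_ends; lra).
  set (w := ((x N - x 0%nat) / PI) ^ (2 * l)) in *.
  replace (w * (2 * rho_max y N p * PI / 3))
    with ((rho_max y N p + rho_max y N p) * (PI / 3) * w) by field.
  apply Rmult_le_compat_r; [assumption |].
  apply Rmult_le_compat_r; lra.
Qed.

Lemma phi_bounded : exists M, forall t, x 0%nat <= t <= x N -> Rabs (phi t) <= M.
Proof.
  apply bounded_of_bounded_pieces; intros n Hn.
  destruct (subinterval_in_range n Hn) as [_ [Hn1 _]].
  eexists; intros t Ht; rewrite (Hphi n Hn t Ht).
  exact (Rabs_lidstone_interp_le _ _ _ _ _ _ _ HLam Hn1 Ht).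
Qed.

Lemma Rabs_error_le K P : 
  (forall s, x 0%nat <= s <= x N -> Rabs (ell s - phi s) <= K) ->
  (forall s, x 0%nat <= s <= x N -> Rabs (phi s) <= P) ->
  forall t, x 0%nat <= t <= x N ->
  Rabs (ell t - phi t) <= alpha_max alpha N * (K + (P + M0 x y N p)).
Proof.
  intros HK HP t Ht.
  destruct (exists_subinterval x N t HN Ht) as [n [Hn Htn]].
  destruct (error_self_similar n t Hn Htn) as [s [Hs ->]].
  rewrite Rabs_mult.
  apply Rmult_le_compat; [apply Rabs_pos | apply Rabs_pos | now apply Rabs_le_alpha_max |].
  pose proof (HK s Hs); pose proof (HP s Hs); pose proof (Rabs_lidstone_interp_ends_le s Hs).
  set (sigma := lidstone_interp Lam p (y 0%nat) (y N) (x 0%nat) (x N) s) in *.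
  replace (ell s - sigma) with (ell s - phi s + phi s + - sigma) by ring.
  pose proof (Rabs_triang (ell s - phi s + phi s) (- sigma)) as Htri1.
  pose proof (Rabs_triang (ell s - phi s) (phi s)) as Htri2.
  rewrite Rabs_Ropp in Htri1.
  lra.
Qed.

End LidstoneFIF.

Theorem corollary4p1
  (p N : nat) (x : nat -> R) (y : nat -> nat -> R) (alpha : nat -> R)
  (Lam : nat -> R -> R) (ell phi : R -> R)
  (HN : (1 <= N)%nat)
  (Hx : forall i, (i < N)%nat -> x i < x (S i))
  (HLam : is_lidstone_family Lam)
  (Halpha : in_Theta x N p alpha)
  (Hell_C : C_on (2 * p) (x 0%nat) (x N) ell)
  (Hell_eq : forall n, (1 <= n <= N)%nat -> forall t, x 0%nat <= t <= x N ->
       ell (L_map x N n t) = alpha n * ell t + q_fun Lam x y alpha N p n t)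
  (Hphi : forall n, (1 <= n <= N)%nat -> forall t, x (n - 1)%nat <= t <= x n ->
       phi t = sum_f_R0 (fun l =>
         (y (n - 1)%nat l * Lam l ((x n - t) / (x n - x (n - 1)%nat))
          + y n l * Lam l ((t - x (n - 1)%nat) / (x n - x (n - 1)%nat)))
         * (x n - x (n - 1)%nat) ^ (2 * l)) p) :
  sup_norm (x 0%nat) (x N) (fun t => ell t - phi t)
  <= alpha_max alpha N / (1 - alpha_max alpha N)
     * (sup_norm (x 0%nat) (x N) phi + M0 x y N p).
Proof.
  pose proof (nodes_lt_ends N x HN Hx) as Hab.
  apply le_of_le_contraction.
  { split; [apply alpha_max_ge0 | exact (alpha_max_lt_1_of_in_Theta p N x alpha HN Hx Halpha)]. }
  destruct (phi_bounded p N x y Lam phi HN Hx HLam Hphi) as [Mphi HMphi].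
  destruct (continuous_within_bounded _ _ ell (Rlt_le _ _ Hab)
              (C_on_continuous_within _ _ _ _ Hell_C)) as [Mell HMell].
  assert (Herr : forall t, x 0%nat <= t <= x N -> Rabs (ell t - phi t) <= Mell + Mphi).
  { intros t Ht; pose proof (Rabs_triang (ell t) (- phi t)); rewrite Rabs_Ropp in *.
    pose proof (HMell t Ht); pose proof (HMphi t Ht); unfold Rminus; lra. }
  apply (sup_norm_le _ _ _ _ _ (Rlt_le _ _ Hab) Herr).
  apply (Rabs_error_le p N x y alpha Lam ell phi HN Hx HLam Hell_eq Hphi);
    intros s Hs;
    [apply (Rabs_le_sup_norm _ _ (fun t => ell t - phi t) (Mell + Mphi))
    | apply (Rabs_le_sup_norm _ _ phi Mphi)]; auto; lra.
Qed.
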